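(* The permutation representation $\alpha_{H_n^n}$ of $S_n\times S_n$ is isomorphic to the regular representation of $S_n\times S_n$.
   Context: Permutations are composed as functions, and $\pi\in S_n$ is identified with the $n\times n$ permutation matrix whose $(i,j)$ entry is $1$ iff $i=\pi(j)$. For $A\in GL_n(\mathbb{Z}_2)$ let $\eta(A)$ (resp. $\theta(A)$) be the partition obtained by sorting the row sums (resp. column sums) of $A$, computed as integers, in weakly decreasing order. $H_n^n=\{A\in GL_n(\mathbb{Z}_2)\mid \eta(A)=\theta(A)=(n,n-1,\dots,2,1)\}$. The group $S_n\times S_n$ acts on $H_n^n$ by $(\pi,\sigma)\bullet A=\pi A\sigma^{-1}$, and $\alpha_{H_n^n}$ denotes the associated complex permutation representation (on the vector space with basis $H_n^n$). *)

From HB Require Import structures.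
From mathcomp Require Import all_boot all_order all_algebra all_fingroup all_solvable all_field all_character.
Set Implicit Arguments. Unset Strict Implicit. Unset Printing Implicit Defensive.
Import GRing.Theory.
Local Open Scope ring_scope.

Definition pmx n (s : 'S_n) : 'M['F_2]_n := \matrix_(i, j) (i == s j)%:R.

Definition act n (g : 'S_n * 'S_n) (A : 'M['F_2]_n) : 'M['F_2]_n :=
  pmx g.1 *m A *m pmx (g.2^-1)%g.

(* row / column sums computed as integers (entries are 0 or 1) *)
Definition rowsum n (A : 'M['F_2]_n) (i : 'I_n) : nat := (\sum_(j < n) (A i j != 0%R : nat))%N.
Definition colsum n (A : 'M['F_2]_n) (j : 'I_n) : nat := (\sum_(i < n) (A i j != 0%R : nat))%N.

Definition eta n (A : 'M['F_2]_n) : seq nat := sort geq [seq rowsum A i | i <- enum 'I_n].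
Definition theta n (A : 'M['F_2]_n) : seq nat := sort geq [seq colsum A j | j <- enum 'I_n].

Definition staircase n : seq nat := rev (iota 1 n).

Definition Hset n : {set 'M['F_2]_n} :=
  [set A | (A \in unitmx) && (eta A == staircase n) && (theta A == staircase n)].

(* permutation matrices of the action on the basis H_n^n (row-vector convention
   of MathComp representations) *)
Definition Hperm_mx n (g : 'S_n * 'S_n) : 'M[algC]_#|Hset n| :=
  \matrix_(k, l) (enum_val l == act g (enum_val k))%:R.


Lemma pmxM n (s t : 'S_n) : pmx (s * t)%g = pmx t *m pmx s.
Proof.
apply/matrixP=> i j; rewrite !mxE (bigD1 (s j)) //= !mxE eqxx mulr1 permM.
rewrite big1 ?addr0 // => k /negbTE nk; rewrite !mxE eq_sym nk mulr0 //.
Qed.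

Lemma pmx1 n : pmx (1%g : 'S_n) = 1%:M.
Proof. by apply/matrixP=> i j; rewrite !mxE perm1. Qed.

Lemma pmx_unit n (s : 'S_n) : pmx s \in unitmx.
Proof.
have : pmx s *m pmx (s^-1)%g = 1%:M by rewrite -pmxM mulVg pmx1.
by case/mulmx1_unit.
Qed.

Lemma actE n g (A : 'M['F_2]_n) i j :
  act g A i j = A (g.1^-1 i)%g (g.2^-1 j)%g.
Proof.
rewrite /act mxE (bigD1 (g.2^-1 j)%g) //= big1 ?addr0; last first.
  move=> k nk; rewrite [pmx _ k j]mxE.
  have -> : (k == (g.2^-1)%g j) = false by apply/negbTE.
  by rewrite mulr0.
rewrite [pmx _ _ j]mxE eqxx mulr1 mxE (bigD1 (g.1^-1 i)%g) //= big1 ?addr0; last first.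
  by move=> k /negbTE nk; rewrite mxE -{1}(permKV g.1 i) (inj_eq perm_inj) eq_sym nk mul0r.
by rewrite mxE permKV eqxx mul1r.
Qed.

Lemma act1 n (A : 'M['F_2]_n) : act 1%g A = A.
Proof. by apply/matrixP=> i j; rewrite actE /= invg1 !perm1. Qed.

Lemma actM n (x y : 'S_n * 'S_n) A : act (x * y)%g A = act y (act x A).
Proof. by apply/matrixP=> i j; rewrite !actE /= !invMg !permM. Qed.

Lemma perm_map_enum n (p : 'S_n) (f : 'I_n -> nat) :
  perm_eq [seq f (p i) | i <- enum 'I_n] [seq f i | i <- enum 'I_n].
Proof.
rewrite (map_comp f p); apply: perm_map; apply: uniq_perm.
- by rewrite map_inj_uniq ?enum_uniq //; apply: perm_inj.
- exact: enum_uniq.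
move=> x; rewrite mem_enum; apply/mapP; exists (p^-1 x)%g; first by rewrite mem_enum.
by rewrite permKV.
Qed.

Lemma sort_perm_geq (s1 s2 : seq nat) : perm_eq s1 s2 -> sort geq s1 = sort geq s2.
Proof.
move=> h; apply/perm_sortP => //.
- by move=> a b; apply: leq_total.
- by move=> a b c h1 h2; apply: leq_trans h2 h1.
- by move=> a b hab; apply: anti_leq; rewrite andbC.
Qed.

Lemma act_Hset n g A : A \in Hset n -> act g A \in Hset n.
Proof.
rewrite !inE => /andP[/andP[uA eA] tA].
have -> : eta (act g A) = eta A.
  rewrite /eta; apply: sort_perm_geq.
  have -> : [seq rowsum (act g A) i | i <- enum 'I_n] =
            [seq rowsum A (g.1^-1 i)%g | i <- enum 'I_n].
    apply: eq_map => i; rewrite /rowsum (reindex_inj (@perm_inj _ g.2)) /=.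
    by apply: eq_bigr => j _; rewrite actE permK.
  exact: (perm_map_enum _ (rowsum A)).
have -> : theta (act g A) = theta A.
  rewrite /theta; apply: sort_perm_geq.
  have -> : [seq colsum (act g A) i | i <- enum 'I_n] =
            [seq colsum A (g.2^-1 i)%g | i <- enum 'I_n].
    apply: eq_map => j; rewrite /colsum (reindex_inj (@perm_inj _ g.1)) /=.
    by apply: eq_bigr => i _; rewrite actE permK.
  exact: (perm_map_enum _ (colsum A)).
by rewrite eA tA !andbT /act !unitmx_mul uA !pmx_unit.
Qed.

Lemma Hperm_mx_repr n : mx_repr [set: 'S_n * 'S_n] (@Hperm_mx n).
Proof.
split.
  apply/matrixP=> k l; rewrite !mxE act1 (inj_eq enum_val_inj) eq_sym //.
move=> x y _ _; apply/matrixP=> k l; rewrite !mxE.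
have Hk : act x (enum_val k) \in Hset n by apply: act_Hset; apply: enum_valP.
pose m := enum_rank_in Hk (act x (enum_val k)).
have em : enum_val m = act x (enum_val k) by rewrite enum_rankK_in.
rewrite (bigD1 m) //= big1 ?addr0; last first.
  move=> m' nm; rewrite !mxE; case: eqP => [e|]; last by rewrite mul0r.
  by case/eqP: nm; apply: enum_val_inj; rewrite e em.
by rewrite !mxE em eqxx mul1r actM.
Qed.

Definition Hperm_repr n : mx_representation algC [set: 'S_n * 'S_n] #|Hset n| :=
  MxRepresentation (@Hperm_mx_repr n).

From Pilot Require Import Defs.
From mathcomp Require Import all_boot all_order all_algebra all_fingroup all_solvable all_field all_character.
From mathcomp Require Import zify.
Set Implicit Arguments. Unset Strict Implicit. Unset Printing Implicit Defensive.
Import GRing.Theory.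

(* The action (pi, sigma) . A = pi A sigma^-1 of S_n x S_n on H_n^n is simply
   transitive, and the permutation representation of a simply transitive action
   is the regular representation.  Transitivity: permuting rows and columns, any
   A in H_n^n can be brought to a matrix whose i-th row sum and j-th column sum
   are n - i and n - j, and the only 0/1 matrix with these sums is the staircase
   [i + j < n], which lies in H_n^n.  Freeness: the row sums of the staircase are
   pairwise distinct, and so are its column sums, so only the identity fixes it. *)

Section RegularAction.
Local Open Scope ring_scope.

Lemma mul_rowsub1 (R : pzRingType) m n p (f : 'I_m -> 'I_n) (g : 'I_n -> 'I_p) :
  rowsub f 1%:M *m rowsub g 1%:M = rowsub (g \o f) (1%:M : 'M[R]_p).
Proof. by rewrite mul_rowsub_mx mul1mx rowsub_comp. Qed.

Lemma row_free_rowsub1 (F : fieldType) m n (f : 'I_m -> 'I_n) :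
  injective f -> row_free (rowsub f (1%:M : 'M[F]_n)).
Proof.
move=> f_inj; apply/row_freeP; exists (colsub f 1%:M).
by rewrite -mxsub_mul mul1mx; apply/matrixP => i j; rewrite !mxE (inj_eq f_inj).
Qed.

Lemma regular_reprEsub (F : fieldType) (gT : finGroupType) (G : {group gT}) x :
  regular_repr F G x = rowsub (fun i => gring_index G (enum_val i * x)) 1%:M.
Proof. by apply/matrixP => i j; rewrite !mxE eq_sym. Qed.

Variables (F : fieldType) (gT : finGroupType) (G : {group gT}) (T : finType).
Variables (to : {action gT &-> T}) (S : {set T}).

Definition perm_action_mx x : 'M[F]_#|S| :=
  \matrix_(k, l) (enum_val l == to (enum_val k) x)%:R.

Variable s0 : T.
Hypotheses (orbit_s0 : orbit to G s0 = S) (stab_s0 : ('C_G[s0 | to] = 1)%g).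

Let s0S : s0 \in S. Proof. by rewrite -orbit_s0 orbit_refl. Qed.
Let idx := enum_rank_in s0S.
Let idxK : {in S, cancel idx enum_val}. Proof. exact: enum_rankK_in. Qed.

Let actS x s : x \in G -> s \in S -> to s x \in S.
Proof. by move=> Gx; rewrite -orbit_s0 orbit_actr. Qed.

Lemma perm_action_mxEsub x : x \in G ->
  perm_action_mx x = rowsub (fun k => idx (to (enum_val k) x)) 1%:M.
Proof.
move=> Gx; apply/matrixP => k l; rewrite !mxE.
by rewrite -[in LHS](idxK (actS Gx (enum_valP k))) (inj_eq enum_val_inj) eq_sym.
Qed.

Lemma card_regular_orbit : #|G| = #|S|.
Proof. by rewrite -orbit_s0 card_orbit stab_s0 indexg1. Qed.

Lemma orbit_map_inj : {in G &, injective (to s0)}.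
Proof.
move=> x y Gx Gy exy; apply/eqP; rewrite eq_mulgV1; apply/eqP/set1gP.
rewrite -stab_s0 inE groupM ?groupV //=; apply/astab1P.
by rewrite actM exy actK.
Qed.

(* The intertwiner is the permutation matrix of the bijection g |-> to s0 g
   from G onto S. *)
Lemma regular_action_rsim (rS : mx_representation F G #|S|) :
  {in G, rS =1 perm_action_mx} -> mx_rsim rS (regular_repr F G).
Proof.
move=> rSE; apply/mx_rsim_sym.
have C_inj : injective (fun i : 'I_#|G| => idx (to s0 (enum_val i))).
  move=> i j /(congr1 enum_val); rewrite !idxK ?actS ?enum_valP //.
  by move/orbit_map_inj => /(_ (enum_valP i) (enum_valP j))/enum_val_inj.
exists (rowsub (fun i => idx (to s0 (enum_val i))) 1%:M).
- exact: card_regular_orbit.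
- exact: row_free_rowsub1.
move=> x Gx; rewrite rSE // perm_action_mxEsub // regular_reprEsub !mul_rowsub1.
apply: eq_rowsub => i /=; rewrite gring_indexK ?groupM ?enum_valP //.
by rewrite idxK ?actS ?enum_valP // actM.
Qed.

End RegularAction.

Lemma sum_ord_ltn m n : m <= n -> \sum_(j < n) (j < m) = m.
Proof.
move=> le_mn; rewrite -[RHS]card_ord -sum1_card (big_ord_widen n (fun=> 1) le_mn).
by rewrite [RHS]big_mkcond; apply: eq_bigr => j _; case: (j < m).
Qed.

Lemma map_subn_iota n : [seq n - i | i <- iota 0 n] = staircase n.
Proof.
rewrite /staircase; elim: n => // n IHn.
have -> : iota 1 n.+1 = rcons (iota 1 n) n.+1 by rewrite -cats1 -{1}(addn1 n) iotaD add1n.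
rewrite rev_rcons /= subn0 -IHn [iota 1 n](iotaDl 1 0) -map_comp.
by congr (_ :: _); apply: eq_map => i /=; rewrite add1n subSS.
Qed.

Lemma sort_geq_staircase n (s : seq nat) :
  (sort geq s == staircase n) = perm_eq s (iota 1 n).
Proof.
have iota_stair : perm_eq (iota 1 n) (staircase n) by rewrite perm_sym perm_rev.
apply/eqP/idP => [e|s_iota]; first by rewrite -(perm_sort geq) e perm_sym.
rewrite (sort_perm_geq (perm_trans s_iota iota_stair)).
apply: sorted_sort; first by move=> a b c ba cb; apply: leq_trans cb ba.
by rewrite rev_sorted iota_sorted.
Qed.

Lemma F2_boolR_neq0 (b : bool) : ((b%:R : 'F_2) != 0)%R = b.
Proof. by case: b. Qed.

Lemma eq_F2 (x y : 'F_2) : (x != 0)%R = (y != 0)%R -> x = y.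
Proof. by case: x y => [[|[|?]] ?] [[|[|?]] ?] //= _; apply: val_inj. Qed.

Section RowColumnSums.

Variable n : nat.
Implicit Types A B : 'M['F_2]_n.

Lemma sum_separable_weight A (u v : 'I_n -> nat) :
  \sum_(p : 'I_n * 'I_n) (A p.1 p.2 != 0%R) * (u p.1 + v p.2) =
  \sum_i rowsum A i * u i + \sum_j colsum A j * v j.
Proof.
rewrite -(pair_bigA _ (fun i j => (A i j != 0%R) * (u i + v j))).
under eq_bigr do under eq_bigr do rewrite mulnDr.
under eq_bigr do rewrite big_split; rewrite big_split [X in _ + X = _]exchange_big /=.
by congr (_ + _); apply: eq_bigr => i _; rewrite big_distrl.
Qed.

Lemma eq_sum_separable_weight A B (w : 'I_n * 'I_n -> nat) (u v : 'I_n -> nat) :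
  (forall p, w p = u p.1 + v p.2) -> rowsum A =1 rowsum B -> colsum A =1 colsum B ->
  \sum_p (A p.1 p.2 != 0%R) * w p = \sum_p (B p.1 p.2 != 0%R) * w p.
Proof.
move=> wE rAB cAB; under eq_bigr do rewrite wE; under [RHS]eq_bigr do rewrite wE.
rewrite !sum_separable_weight.
by congr (_ + _); apply: eq_bigr => i _; rewrite ?rAB ?cAB.
Qed.

Lemma rowsum_act g A i : rowsum (Defs.act g A) i = rowsum A (g.1^-1 i)%g.
Proof.
rewrite /rowsum (reindex_inj (@perm_inj _ g.2)) /=.
by apply: eq_bigr => j _; rewrite actE permK.
Qed.

Lemma colsum_act g A j : colsum (Defs.act g A) j = colsum A (g.2^-1 j)%g.
Proof.
rewrite /colsum (reindex_inj (@perm_inj _ g.1)) /=.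
by apply: eq_bigr => i _; rewrite actE permK.
Qed.

Lemma act_eq_trivial g A :
  injective (rowsum A) -> injective (colsum A) -> Defs.act g A = A -> g = 1%g.
Proof.
case: g => a b r_inj c_inj gA.
have /eqP : (a^-1 = 1)%g.
  by apply/permP => i; rewrite perm1; apply: r_inj; rewrite -(rowsum_act (a, b)) gA.
have /eqP : (b^-1 = 1)%g.
  by apply/permP => j; rewrite perm1; apply: c_inj; rewrite -(colsum_act (a, b)) gA.
by rewrite !eq_invg1 => /eqP-> /eqP->.
Qed.

Lemma perm_eq_iota_perm (f : 'I_n -> nat) :
  perm_eq [seq f i | i <- enum 'I_n] (iota 1 n) ->
  exists p : 'S_n, forall i, f (p i) = n - i.
Proof.
move=> f_iota.
have f_inj : injective f.
  by apply/injectiveP; rewrite /injectiveb /dinjectiveb (perm_uniq f_iota) iota_uniq.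
have f_range i : 0 < f i <= n.
  by have := map_f f (mem_enum predT i); rewrite (perm_mem f_iota) mem_iota add1n ltnS.
pose q i : 'I_n := insubd i (n - f i).
have qE i : val (q i) = n - f i by rewrite val_insubd ifT //; have := f_range i; lia.
have q_inj : injective q.
  move=> i j /(congr1 val); rewrite !qE => eq_f; apply: f_inj.
  by move: (f_range i) (f_range j); lia.
exists (perm q_inj)^-1%g => i; have := f_range ((perm q_inj)^-1 i)%g.
by rewrite -[in n - i](permKV (perm q_inj) i) permE qE; case/andP => _ /subKn.
Qed.

End RowColumnSums.

Lemma staircase_cell_leqif (b : bool) (n w : nat) :
  (w < n) * w.*2.+1 + b * n.*2 <= b * w.*2.+1 + (w < n) * n.*2 ?= iff (b == (w < n)).
Proof. by case: b; case: ltnP => w_n; split; lia. Qed.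

Section Staircase.

Variable n : nat.
Implicit Types A B : 'M['F_2]_n.

Definition staircase_mx : 'M['F_2]_n := (\matrix_(i, j) (i + j < n)%N%:R)%R.

Lemma rowsum_staircase_mx i : rowsum staircase_mx i = n - i.
Proof.
rewrite /rowsum -[RHS](sum_ord_ltn (leq_subr i n)).
by apply: eq_bigr => j _; rewrite mxE F2_boolR_neq0 ltn_subRL.
Qed.

Lemma colsum_staircase_mx j : colsum staircase_mx j = n - j.
Proof.
rewrite /colsum -[RHS](sum_ord_ltn (leq_subr j n)).
by apply: eq_bigr => i _; rewrite mxE F2_boolR_neq0 ltn_subRL addnC.
Qed.

Lemma staircase_mx_unit : staircase_mx \in unitmx.
Proof.
pose L : 'M['F_2]_n := (\matrix_(i, j) (j <= i)%N%:R)%R.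
have L_trig : is_trig_mx L by apply/is_trig_mxP => i j lt_ij; rewrite mxE leqNgt lt_ij.
have -> : staircase_mx = row_perm (perm (@rev_ord_inj n)) L.
  apply/matrixP => i j; rewrite !mxE permE /=; congr ((nat_of_bool _)%:R)%R.
  by have := ltn_ord i; lia.
rewrite row_permE unitmx_mul unitmx_perm unitmxE det_trig //.
by rewrite big1 ?unitr1 // => i _; rewrite mxE leqnn.
Qed.

Lemma staircase_mx_in_Hset : staircase_mx \in Hset n.
Proof.
rewrite inE staircase_mx_unit /eta /theta !sort_geq_staircase.
rewrite (eq_map rowsum_staircase_mx) (eq_map colsum_staircase_mx).
by rewrite (map_comp (subn n) val) val_enum_ord map_subn_iota perm_rev perm_refl.
Qed.

(* The weight 2(i+j)+1 - 2n is negative exactly on the staircase S, so every term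
   of sum_p ([B p != 0] - [S p != 0]) * weight p is nonnegative and vanishes only
   if B p = S p; the whole sum vanishes because weights of the form u i + v j
   only see row and column sums. *)
Lemma staircase_mx_uniq B :
  (forall i, rowsum B i = n - i) -> (forall j, colsum B j = n - j) -> B = staircase_mx.
Proof.
set S := staircase_mx => rB cB.
have rBS : rowsum B =1 rowsum S by move=> i; rewrite rB rowsum_staircase_mx.
have cBS : colsum B =1 colsum S by move=> j; rewrite cB colsum_staircase_mx.
pose w1 (p : 'I_n * 'I_n) := (p.1 + p.2).*2.+1.
pose w2 (p : 'I_n * 'I_n) := n.*2.
have e1 : \sum_p (B p.1 p.2 != 0%R) * w1 p = \sum_p (S p.1 p.2 != 0%R) * w1 p.
  apply: (eq_sum_separable_weight (u := fun i => i.*2.+1) (v := fun j => j.*2)) => // p.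
  by rewrite /w1 doubleD addSn.
have e2 : \sum_p (B p.1 p.2 != 0%R) * w2 p = \sum_p (S p.1 p.2 != 0%R) * w2 p.
  by apply: (eq_sum_separable_weight (u := fun=> n.*2) (v := fun=> 0)) => // p; rewrite addn0.
have cell p : (S p.1 p.2 != 0%R) * w1 p + (B p.1 p.2 != 0%R) * w2 p
    <= (B p.1 p.2 != 0%R) * w1 p + (S p.1 p.2 != 0%R) * w2 p
    ?= iff ((B p.1 p.2 != 0%R) == (S p.1 p.2 != 0%R)).
  by rewrite mxE F2_boolR_neq0; apply: staircase_cell_leqif.
have [_] := leqif_sum (P := xpredT) (fun p _ => cell p).
rewrite !big_split /= e1 e2 addnC eqxx => /esym/forallP all_eq.
by apply/matrixP => i j; apply: eq_F2; have /eqP := all_eq (i, j).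
Qed.

Lemma Hset_normalize A : A \in Hset n -> exists g, Defs.act g A = staircase_mx.
Proof.
rewrite inE /eta /theta !sort_geq_staircase => /andP[/andP[_ rA] cA].
have [[p rp] [q cq]] := (perm_eq_iota_perm rA, perm_eq_iota_perm cA).
exists (p^-1, q^-1)%g; apply: staircase_mx_uniq => i.
  by rewrite rowsum_act invgK rp.
by rewrite colsum_act invgK cq.
Qed.

Definition bimul_action : {action 'S_n * 'S_n &-> 'M['F_2]_n} :=
  @TotalAction _ _ (fun A g => Defs.act g A) (@Defs.act1 n) (fun A x y => Defs.actM x y A).

Lemma orbit_staircase_mx : orbit bimul_action [set: 'S_n * 'S_n] staircase_mx = Hset n.
Proof.
apply/setP => A; apply/orbitP/idP => [[g _ <-]|/Hset_normalize[g gA]].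
  exact: act_Hset staircase_mx_in_Hset.
by exists g^-1%g; rewrite ?inE // -gA actK.
Qed.

Lemma astab_staircase_mx : 'C_[set: 'S_n * 'S_n][staircase_mx | bimul_action]%g = 1%g.
Proof.
have sum_inj (s : 'I_n -> nat) : (forall i, s i = n - i) -> injective s.
  by move=> sE i j; rewrite !sE => eq_s; apply: ord_inj; move: (ltn_ord i) (ltn_ord j); lia.
apply/trivgP/subsetP => g /setIP[_ /astab1P g_fix]; rewrite inE; apply/eqP.
apply: act_eq_trivial g_fix; apply: sum_inj.
  exact: rowsum_staircase_mx.
exact: colsum_staircase_mx.
Qed.

End Staircase.

Theorem mainTheorem2 (n : nat) :
  mx_rsim (Hperm_repr n) (regular_repr algC [set: 'S_n * 'S_n]).
Proof.
by apply: (regular_action_rsim (orbit_staircase_mx n) (astab_staircase_mx n)) => x _.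
Qed.
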